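(* Let $p_1,\ldots,p_m\in\mathbb Z_{>0}$ and $p=\operatorname{lcm}(p_1,\ldots,p_m)$. Let $\Gamma_1,\ldots,\Gamma_m$ be words in affine letters, $e_1,\ldots,e_m\in\mathbb Z_{\ge0}$, $z\in\mathbb C$, $t\in\mathbb Z_{\ge0}$, and $a_\nu,b_\nu,q_\nu\in\mathbb C$ for $1\le\nu\le t$ ($t=0$ allowed). Assume that all affine factors appearing are nonzero at the positive integers at which they are evaluated, after all scale changes (that is, each affine factor $(a,b)$ occurring in a letter of $\Gamma_j$ remains nonzero when its slope is replaced by $a/(p/p_j)$ and it is evaluated at positive integers up to $pk$, and $a_\nu m/p+b_\nu\ne0$ for positive integers $m\le pk$), and fix compatible branches of the powers. Then for every positive integer $k$, \[ S(k)=\sum_{n=1}^{k}z^n\prod_{\nu=1}^{t}(a_\nu n+b_\nu)^{q_\nu}\prod_{j=1}^{m}\mathcal G_{\Gamma_j}(p_jn)^{e_j}\in\operatorname{span}_{\mathbb C}\{\mathcal G_\Delta(pk)\}_\Delta, \] where $\Delta$ ranges over words in affine letters.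
   Context: An affine letter is a triple $L=(\boldsymbol\rho,\sigma,\mathbf A)$ with $\boldsymbol\rho=(\rho_1,\ldots,\rho_t)\in\mathbb C^t$, $\sigma\in\mathbb C$, $\mathbf A=((a_1,b_1),\ldots,(a_t,b_t))$, $a_\nu,b_\nu\in\mathbb C$; its value at a positive integer $n$ is $L(n)=\sigma^n\prod_{\nu=1}^t(a_\nu n+b_\nu)^{-\rho_\nu}$ (branches fixed). For a word $\Gamma=(L_1,\ldots,L_d)$ of affine letters, $\mathcal G_\Gamma(N)=\sum_{N\ge n_1>\cdots>n_d\ge1}\prod_{j=1}^dL_j(n_j)$ and $\mathcal G_\emptyset(N)=1$. *)

From HB Require Import structures.
From mathcomp Require Import all_boot all_order all_algebra.
From mathcomp Require Import reals complex.
Set Implicit Arguments. Unset Strict Implicit. Unset Printing Implicit Defensive.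
Import Order.TTheory GRing.Theory Num.Theory.
Local Open Scope ring_scope.

Section AffineLetters.
Variable R : realType.
Local Notation C := (R[i]).

(* An affine factor (rho, (a, b)) contributes (a n + b)^(-rho).
   An affine letter L = (rho, sigma, A) is encoded as its sigma together with
   the list of its t affine factors (rho_nu, (a_nu, b_nu)). *)
Definition letter : eqType := (C * seq (C * (C * C)))%type.
Definition lsig (L : letter) : C := L.1.
Definition lfac (L : letter) : seq (C * (C * C)) := L.2.

Definition word : eqType := seq letter.

(* pw x s  stands for the (fixed choice of branch of the) power  x^s. *)
Definition letter_val (pw : C -> C -> C) (L : letter) (n : nat) : C :=
  lsig L ^+ n * \prod_(f <- lfac L) pw (f.2.1 * n%:R + f.2.2) (- f.1).

(* G_Gamma(N) = sum_{N >= n_1 > ... > n_d >= 1} prod_j L_j(n_j),  G_[::](N) = 1 *)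
Fixpoint Gw (pw : C -> C -> C) (w : word) (N : nat) : C :=
  match w with
  | [::] => 1
  | L :: w' => \sum_(1 <= n < N.+1) letter_val pw L n * Gw pw w' n.-1
  end.

End AffineLetters.

(* The functions N |-> G_Delta(N) span an algebra: two nested sums multiply by
   the quasi-shuffle (stuffle) rule, in which two colliding letters merge into
   their pointwise product, again an affine letter.  The span is also stable
   under g |-> (N |-> sum_{n <= N} L(n) g(n)).  Sampling at multiples of d is
   the root-of-unity filter 1_{d | n} = d^-1 sum_{r < d} w^(r n), and w^(r n)
   is absorbed into the sigma of a letter; together with the rescaling
   sigma |-> sigma^(1/d), a |-> a/d this puts N |-> G_Gamma(N %/ d) in the span.
   Finally S(k) = sum_{n <= p k, p | n} lambda(n) prod_j G_(Gamma_j)(n %/ (p / p_j))^e_j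
   for the letter lambda obtained by rescaling (z, (a_nu, b_nu, -q_nu)) by p. *)
From HB Require Import structures.
From mathcomp Require Import all_boot all_order all_algebra.
From mathcomp Require Import cyclic separable cyclotomic.
From mathcomp Require Import reals complex.
From mathcomp Require Import ring.
Import Order.TTheory GRing.Theory Num.Theory.
Local Open Scope ring_scope.
Set Implicit Arguments. Unset Strict Implicit.

Lemma prim_root_exists (F : numClosedFieldType) (d : nat) :
  (0 < d)%N -> exists w : F, d.-primitive_root w.
Proof.
move=> d_gt0.
have [r Dp] := closed_field_poly_normal ('X^d - 1 : {poly F}).
rewrite (monicP _) ?monicXnsubC // scale1r in Dp.
have r_unity : all d.-unity_root r.
  by apply/allP=> w; rewrite -root_prod_XsubC -Dp.
have size_r : (d < (size r).+1)%N.
  by rewrite -(size_prod_XsubC r id) -Dp size_XnsubC.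
have [|w _ prim_w] := hasP (has_prim_root d_gt0 r_unity _ size_r); last by exists w.
by rewrite -separable_prod_XsubC -Dp separable_Xn_sub_1 // pnatr_eq0 -lt0n.
Qed.

Lemma dvdn_indicator_prim_root (F : numFieldType) (d n : nat) (w : F) :
  d.-primitive_root w -> ((d %| n)%N)%:R = d%:R^-1 * \sum_(r < d) (w ^+ r) ^+ n.
Proof.
move=> prim_w; have d_gt0 := prim_order_gt0 prim_w.
have sum_powE : \sum_(r < d) (w ^+ r) ^+ n = \sum_(r < d) (w ^+ n) ^+ r.
  by apply: eq_bigr => r _; rewrite -!exprM mulnC.
rewrite sum_powE; have [dvd_dn | ndvd_dn] := boolP (d %| n)%N.
  have /eqP-> : w ^+ n == 1 by rewrite -(prim_order_dvd prim_w).
  under eq_bigr do rewrite expr1n.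
  by rewrite sumr_const card_ord mulVf // pnatr_eq0 -lt0n.
have : (w ^+ n - 1) * \sum_(r < d) (w ^+ n) ^+ r = 0.
  by rewrite -subrX1 -exprM mulnC exprM (prim_expr_order prim_w) expr1n subrr.
move/eqP; rewrite mulf_eq0 subr_eq0 -(prim_order_dvd prim_w) (negbTE ndvd_dn).
by move=> /eqP->; rewrite mulr0.
Qed.

Lemma sum_dvdn_indicator (V : pzSemiRingType) (d N : nat) (F : nat -> V) :
  (0 < d)%N ->
  \sum_(1 <= n < N.+1) ((d %| n)%N)%:R * F n = \sum_(1 <= n < (N %/ d).+1) F (d * n)%N.
Proof.
move=> d_gt0; elim: N => [|N IHN]; first by rewrite div0n !big_geq.
rewrite big_nat_recr // IHN divnS //.
have [dvd_dN | _] /= := boolP (d %| N.+1)%N; last by rewrite mul0r addr0.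
rewrite mul1r add1n [RHS]big_nat_recr //=; congr (_ + F _).
have -> : (N %/ d).+1 = (N.+1 %/ d)%N by rewrite divnS // dvd_dN.
by rewrite mulnC divnK.
Qed.

Lemma predn_mul_divn (d n : nat) : (0 < d)%N -> (0 < n)%N -> ((d * n).-1 %/ d = n.-1)%N.
Proof.
move=> d_gt0; case: n => [|n] // _.
have -> : ((d * n.+1).-1 = n * d + d.-1)%N.
  by rewrite mulnS -(prednK d_gt0) addSn /= addnC mulnC.
by rewrite divnMDl // divn_small ?addn0 // prednK.
Qed.

Section GSpan.
Variable R : realType.
Variable pw : R[i] -> R[i] -> R[i].
Local Notation C := (R[i]).
Local Notation letter := (letter R).
Local Notation word := (word R).
Local Notation Lv := (letter_val pw).
Local Notation G := (Gw pw).

Definition Gcomb (cs : seq (C * word)) (N : nat) : C := \sum_(c <- cs) c.1 * G c.2 N.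

Definition spanG (g : nat -> C) := exists cs, forall N, g N = Gcomb cs N.

Lemma eq_spanG (f g : nat -> C) : f =1 g -> spanG f -> spanG g.
Proof. by move=> efg [cs Hf]; exists cs => N; rewrite -efg. Qed.

Lemma spanG_Gw (w : word) : spanG (G w).
Proof. by exists [:: (1, w)] => N; rewrite /Gcomb big_seq1 mul1r. Qed.

Lemma spanG1 : spanG (fun=> 1).
Proof. exact: (spanG_Gw [::]). Qed.

Lemma spanG0 : spanG (fun=> 0).
Proof. by exists [::] => N; rewrite /Gcomb big_nil. Qed.

Lemma spanGD (f g : nat -> C) : spanG f -> spanG g -> spanG (fun N => f N + g N).
Proof.
by move=> [cf Hf] [cg Hg]; exists (cf ++ cg) => N; rewrite /Gcomb big_cat Hf Hg.
Qed.

Lemma spanGZ (a : C) (g : nat -> C) : spanG g -> spanG (fun N => a * g N).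
Proof.
move=> [cs Hg]; exists [seq (a * c.1, c.2) | c <- cs] => N.
by rewrite /Gcomb big_map Hg mulr_sumr; apply: eq_bigr => c _; rewrite mulrA.
Qed.

Lemma spanG_sum (I : Type) (s : seq I) (F : I -> nat -> C) :
  (forall i, spanG (F i)) -> spanG (fun N => \sum_(i <- s) F i N).
Proof.
move=> spanF; elim: s => [|i s IHs].
  by apply: eq_spanG spanG0 => N; rewrite big_nil.
by apply: eq_spanG (spanGD (spanF i) IHs) => N; rewrite big_cons.
Qed.

Lemma spanG_nested_of_Gw (L : letter) (h : nat -> nat) :
    (forall w, spanG (fun N => \sum_(1 <= n < N.+1) Lv L n * G w (h n))) ->
  forall g, spanG g -> spanG (fun N => \sum_(1 <= n < N.+1) Lv L n * g (h n)).
Proof.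
move=> spanLw g [cs Hg].
apply: eq_spanG (spanG_sum cs (fun c => spanGZ c.1 (spanLw c.2))) => N /=.
under [RHS]eq_bigr => n _ do rewrite Hg /Gcomb mulr_sumr.
rewrite exchange_big /=; apply: eq_bigr => c _.
by rewrite mulr_sumr; apply: eq_bigr => n _; rewrite mulrCA.
Qed.

Lemma spanG_nested (L : letter) (g : nat -> C) :
  spanG g -> spanG (fun N => \sum_(1 <= n < N.+1) Lv L n * g n.-1).
Proof. by apply: spanG_nested_of_Gw => w; apply: (spanG_Gw (L :: w)). Qed.

Definition lmul (L M : letter) : letter := (lsig L * lsig M, lfac L ++ lfac M).

Lemma letter_val_lmul (L M : letter) n : Lv (lmul L M) n = Lv L n * Lv M n.
Proof. by rewrite /letter_val /lmul /lsig /lfac /= big_cat exprMn mulrACA. Qed.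

Lemma Gw0 (w : word) : G w 0 = (w == [::])%:R.
Proof. by case: w => [|L w] //=; rewrite big_geq. Qed.

Lemma Gw_cons_succ (L : letter) (w : word) N :
  G (L :: w) N.+1 = G (L :: w) N + Lv L N.+1 * G w N.
Proof. exact: big_nat_recr. Qed.

Lemma spanG_nested_le (L : letter) (g : nat -> C) :
  spanG g -> spanG (fun N => \sum_(1 <= n < N.+1) Lv L n * g n).
Proof.
apply: spanG_nested_of_Gw => -[|M w]; first exact: (spanG_Gw [:: L]).
apply: eq_spanG (spanGD (spanG_Gw (L :: M :: w)) (spanG_Gw (lmul L M :: w))) => N.
rewrite [LHS]/= -big_split; apply: eq_big_nat => n /andP[n_gt0 _].
by rewrite -[in RHS](prednK n_gt0) Gw_cons_succ prednK //= letter_val_lmul mulrDr mulrA prednK.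
Qed.

Lemma Gw_cons_mul (L M : letter) (u v : word) N :
  G (L :: u) N * G (M :: v) N =
  \sum_(1 <= n < N.+1) (Lv L n * (G u n.-1 * G (M :: v) n.-1)
     + Lv M n * (G (L :: u) n.-1 * G v n.-1)
     + Lv (lmul L M) n * (G u n.-1 * G v n.-1)).
Proof.
elim: N => [|N IHN]; first by rewrite !Gw0 mul0r big_geq.
rewrite !Gw_cons_succ big_nat_recr // -IHN letter_val_lmul /=.
move: (G (L :: u) N) (G (M :: v) N) => GLu GMv; ring.
Qed.

Lemma spanG_Gw_mul (w1 w2 : word) : spanG (fun N => G w1 N * G w2 N).
Proof.
elim: w1 w2 => [|L u IHu] w2.
  by apply: eq_spanG (spanG_Gw w2) => N; rewrite mul1r.
elim: w2 => [|M v IHv].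
  by apply: eq_spanG (spanG_Gw (L :: u)) => N; rewrite mulr1.
have := spanGD (spanGD (spanG_nested L (IHu (M :: v))) (spanG_nested M IHv))
               (spanG_nested (lmul L M) (IHu v)).
by apply: eq_spanG => N; rewrite Gw_cons_mul !big_split.
Qed.

Lemma spanGM (f g : nat -> C) : spanG f -> spanG g -> spanG (fun N => f N * g N).
Proof.
move=> [cf Hf] [cg Hg].
have := spanG_sum cf (fun c => spanG_sum cg
  (fun d => spanGZ (c.1 * d.1) (spanG_Gw_mul c.2 d.2))).
apply: eq_spanG => N; rewrite Hf Hg /Gcomb mulr_suml; apply: eq_bigr => c _.
by rewrite mulr_sumr; apply: eq_bigr => d _; rewrite mulrACA.
Qed.

Lemma spanGX (g : nat -> C) (e : nat) : spanG g -> spanG (fun N => g N ^+ e).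
Proof.
move=> spang; elim: e => [|e IHe]; first exact: spanG1.
by apply: eq_spanG (spanGM spang IHe) => N; rewrite exprS.
Qed.

Lemma spanG_prod (I : Type) (s : seq I) (F : I -> nat -> C) :
  (forall i, spanG (F i)) -> spanG (fun N => \prod_(i <- s) F i N).
Proof.
move=> spanF; elim: s => [|i s IHs].
  by apply: eq_spanG spanG1 => N; rewrite big_nil.
by apply: eq_spanG (spanGM (spanF i) IHs) => N; rewrite big_cons.
Qed.

Definition ltwist (c : C) (L : letter) : letter := (c * lsig L, lfac L).

Lemma letter_val_ltwist (c : C) (L : letter) n : Lv (ltwist c L) n = c ^+ n * Lv L n.
Proof. by rewrite /letter_val /ltwist /lsig /lfac /= exprMn mulrA. Qed.

Lemma spanG_dvdn_sum (d : nat) (L : letter) (f : nat -> C) : (0 < d)%N ->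
    (forall M, spanG (fun N => \sum_(1 <= n < N.+1) Lv M n * f n)) ->
  spanG (fun N => \sum_(1 <= n < N.+1) ((d %| n)%N)%:R * (Lv L n * f n)).
Proof.
move=> d_gt0 spanMf; have [w prim_w] := prim_root_exists C d_gt0.
have := spanGZ d%:R^-1 (spanG_sum (index_enum 'I_d)
          (fun r : 'I_d => spanMf (ltwist (w ^+ r) L))).
apply: eq_spanG => N; rewrite exchange_big mulr_sumr; apply: eq_bigr => n _.
rewrite (dvdn_indicator_prim_root n prim_w) -mulrA mulr_suml; congr (_ * _).
by apply: eq_bigr => r _; rewrite letter_val_ltwist mulrA.
Qed.

Definition lscale (d : nat) (L : letter) : letter :=
  (d.-root (lsig L), [seq (f.1, (f.2.1 / d%:R, f.2.2)) | f <- lfac L]).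

Lemma letter_val_lscale (d : nat) (L : letter) n : (0 < d)%N ->
  Lv (lscale d L) (d * n)%N = Lv L n.
Proof.
move=> d_gt0; rewrite /letter_val /lscale /lsig /lfac /= big_map exprM rootCK //.
congr (_ * _); apply: eq_bigr => f _ /=.
by rewrite natrM mulrA divfK // pnatr_eq0 -lt0n.
Qed.

Lemma spanG_Gw_divn (d : nat) (w : word) : (0 < d)%N -> spanG (fun N => G w (N %/ d)).
Proof.
move=> d_gt0; elim: w => [|L w IHw]; first exact: spanG1.
have := spanG_dvdn_sum (lscale d L) d_gt0 (fun M => spanG_nested M IHw).
apply: eq_spanG => N /=; rewrite sum_dvdn_indicator //.
apply: eq_big_nat => n /andP[n_gt0 _].
by rewrite letter_val_lscale // predn_mul_divn.
Qed.

End GSpan.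

Theorem theorem6p2 (R : realType) (pw : R[i] -> R[i] -> R[i])
  (m : nat) (ps : 'I_m -> nat) (Gam : 'I_m -> word R) (e : 'I_m -> nat)
  (z : R[i]) (t : nat) (a b q : 'I_t -> R[i]) :
  (forall j, (0 < ps j)%N) ->
  let p := \big[lcmn/1%N]_(j < m) ps j in
  let S := fun k : nat =>
    \sum_(1 <= n < k.+1)
      z ^+ n * (\prod_(nu < t) pw (a nu * n%:R + b nu) (q nu))
        * \prod_(j < m) Gw pw (Gam j) (ps j * n) ^+ e j in
  exists cs : seq (R[i] * word R),
    forall k : nat, (0 < k)%N ->
      (forall j : 'I_m, forall L, L \in Gam j -> forall f, f \in lfac L ->
         forall i : nat, (0 < i <= p * k)%N ->
           f.2.1 / (p %/ ps j)%:R * i%:R + f.2.2 != 0) ->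
      (forall nu : 'I_t, forall i : nat, (0 < i <= p * k)%N ->
         a nu * i%:R / p%:R + b nu != 0) ->
      S k = \sum_(c <- cs) c.1 * Gw pw c.2 (p * k).
Proof.
move=> ps_gt0 p S.
have p_gt0 : (0 < p)%N.
  by apply: (big_ind (fun x => 0 < x)%N) => // x y; rewrite lcmn_gt0 => -> ->.
have ps_dvd j : (ps j %| p)%N by apply: biglcmn_sup.
have cofactor_gt0 j : (0 < p %/ ps j)%N by rewrite divn_gt0 // dvdn_leq.
pose L0 : letter R := (z, [seq (- q nu, (a nu, b nu)) | nu <- index_enum 'I_t]).
pose U N := \prod_(j <- index_enum 'I_m) Gw pw (Gam j) (N %/ (p %/ ps j)) ^+ e j.
have spanU : spanG pw U.
  by apply: spanG_prod => j; apply/spanGX/spanG_Gw_divn.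
have [cs DS] := spanG_dvdn_sum (lscale p L0) p_gt0 (fun M => spanG_nested_le M spanU).
exists cs => k _ _ _; rewrite -[RHS]/(Gcomb pw cs (p * k)) -DS.
rewrite sum_dvdn_indicator // mulKn //; apply: eq_big_nat => n _.
rewrite letter_val_lscale //; congr (_ * _).
  by rewrite /letter_val big_map; congr (_ * _); apply: eq_bigr => nu _; rewrite opprK.
by apply: eq_bigr => j _; rewrite -{1}(divnK (ps_dvd j)) -mulnA mulKn.
Qed.
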